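(* Assume: (i) for each $j\in N$ there exists $x^{s,*}_j$ with $f_j(x^{s,*}_j,0)=0$; (ii) there exists at least one bus $j\in N$ such that whenever $f_j(\bar x^s_j,-\bar\omega_j)=0$ for constants $\bar x^s_j,\bar\omega_j$, then $\bar\omega_j=0$; (iii) the hybrid system $\mathcal H=(C,f,D,g)$ has an equilibrium. Then every equilibrium $z^*=(x^*,\sigma^* )$ of $\mathcal H$, with $x^*=(\eta^*,\omega^*,x^{s,*})$, satisfies $\omega^*=0_{|N|}$, $\sigma^*=0_{|N|}$ and $z^*\in C$.
   Context: Network model. $(N,E)$ is a connected directed graph with $N=\{1,\dots,|N|\}$, $E\subseteq N\times N$, with arbitrary orientation: if $(i,j)\in E$ then $(j,i)\notin E$. For $j\in N$, ''$i:i\to j$'' ranges over $i$ with $(i,j)\in E$ and ''$k:j\to k$'' over $k$ with $(j,k)\in E$. Constants: $M_j>0$, $p^L_j\in\mathbb{R}$ ($j\in N$), $B_{ij}>0$ ($(i,j)\in E$). Continuous state $x=(\eta,\omega,x^s)\in\mathbb{R}^n$ with $\eta_{ij}\in\mathbb{R}$ ($(i,j)\in E$), $\omega_j\in\mathbb{R}$, $x^s_j\in\mathbb{R}^{n_j}$ ($j\in N$), $n=|E|+|N|+\sum_jn_j$; $p_{ij}=B_{ij}\sin\eta_{ij}$, $s_j=g_j(x^s_j,-\omega_j)$, where $f_j:\mathbb{R}^{n_j}\times\mathbb{R}\to\mathbb{R}^{n_j}$, $g_j:\mathbb{R}^{n_j}\times\mathbb{R}\to\mathbb{R}$ are globally Lipschitz.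 Hysteretic loads as a hybrid system. For each $j$ constants $\overline d_j\ge0$ and thresholds $\omega^1_j>\omega^0_j>0$ are given. ${\rm sgn}(a)=1$ if $a\ge0$ and $-1$ otherwise. The discrete state is $\sigma\in P^{|N|}$, $P=\{-1,0,1\}$, and $z=(x,\sigma)$. Let $\mathcal I_j(\omega_j)=\{{\rm sgn}(\omega_j)\}$ if $|\omega_j|>\omega^1_j$, $\{0\}$ if $|\omega_j|<\omega^0_j$, $\{0,{\rm sgn}(\omega_j)\}$ if $\omega^0_j\le|\omega_j|\le\omega^1_j$; $\Lambda=C=\{z\in\mathbb{R}^n\times P^{|N|}:\sigma_j\in\mathcal I_j(\omega_j)\ \forall j\}$. Flow map $f$ on $C$: $\dot\eta_{ij}=\omega_i-\omega_j$; $M_j\dot\omega_j=-p^L_j+s_j-\overline d_j\sigma_j-\sum_{k:j\to k}p_{jk}+\sum_{i:i\to j}p_{ij}$; $\dot x^s_j=f_j(x^s_j,-\omega_j)$; $\dot\sigma_j=0$. Jump set $D$: the set of $z\in\Lambda$ such that for some $j$, either ($|\omega_j|=\omega^1_j$ and $\sigma_j=0$) or ($|\omega_j|=\omega^0_j$ and $\sigma_j={\rm sgn}(\omega_j)$). Jump map $g$ on $D$: $x^+=x$; $\sigma_j^+={\rm sgn}(\omega_j)$ if $|\omega_j|=\omega^1_j$ and $\sigma_j=0$, $\sigma_j^+=0$ if $|\omega_j|=\omega^0_j$ and $\sigma_j={\rm sgn}(\omega_j)$, $\sigma_j^+=\sigma_j$ otherwise (so $g(D)\subseteq C$). A point $z^*$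 is an equilibrium of $\mathcal H$ if $f(z^* )=0$ whenever $z^*\in C$ and $g(z^* )=z^*$ whenever $z^*\in D$. *)

From Stdlib Require Import Reals Lra Lia ZArith Relations.
From Stdlib Require Vectors.Fin.
Open Scope R_scope.

(* Buses are indexed 0 .. nb-1 (the paper's 1..|N| shifted by one). *)

Definition vec (n : nat) := Fin.t n -> R.

Record params := {
  nb   : nat;
  E    : nat -> nat -> bool;
  M    : nat -> R;
  pL   : nat -> R;
  B    : nat -> nat -> R;
  nj   : nat -> nat;
  fs   : forall j, vec (nj j) -> R -> vec (nj j);
  gs   : forall j, vec (nj j) -> R -> R;
  dbar : nat -> R;
  w0   : nat -> R;
  w1   : nat -> R
}.

Definition glob_lip_vec {n : nat} (F : vec n -> R -> vec n) : Prop :=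
  exists L : R, forall (x y : vec n) (u v r : R),
    (forall k, Rabs (x k - y k) <= r) -> Rabs (u - v) <= r ->
    forall i, Rabs (F x u i - F y v i) <= L * r.

Definition glob_lip_scal {n : nat} (G : vec n -> R -> R) : Prop :=
  exists L : R, forall (x y : vec n) (u v r : R),
    (forall k, Rabs (x k - y k) <= r) -> Rabs (u - v) <= r ->
    Rabs (G x u - G y v) <= L * r.

Definition undirected_adj (P : params) (a b : nat) : Prop :=
  E P a b = true \/ E P b a = true.

Definition wf (P : params) : Prop :=
  (forall i j, E P i j = true -> (i < nb P)%nat /\ (j < nb P)%nat) /\
  (forall i j, E P i j = true -> E P j i = false) /\
  (forall i j, (i < nb P)%nat -> (j < nb P)%nat ->
      clos_refl_trans nat (undirected_adj P) i j) /\
  (forall j, (j < nb P)%nat -> 0 < M P j) /\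
  (forall i j, E P i j = true -> 0 < B P i j) /\
  (forall j, (j < nb P)%nat -> 0 <= dbar P j) /\
  (forall j, (j < nb P)%nat -> 0 < w0 P j /\ w0 P j < w1 P j) /\
  (forall j, glob_lip_vec (fs P j)) /\
  (forall j, glob_lip_scal (gs P j)).

(* hybrid state z = (x, sgm), x = (eta, omg, x^s); sigma_j in Z
   (membership in C forces sigma_j in {-1,0,1}) *)
Record state (P : params) := {
  eta   : nat -> nat -> R;
  omg : nat -> R;
  xs    : forall j, vec (nj P j);
  sgm : nat -> Z
}.
Arguments eta {P}. Arguments omg {P}. Arguments xs {P}. Arguments sgm {P}.

Fixpoint rsum (n : nat) (F : nat -> R) : R :=
  match n with O => 0 | S m => rsum m F + F m end.

Definition sgn (a : R) : Z := if Rle_dec 0 a then 1%Z else (-1)%Z.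

Definition inI (P : params) (j : nat) (w : R) (s : Z) : Prop :=
  (w1 P j < Rabs w -> s = sgn w) /\
  (Rabs w < w0 P j -> s = 0%Z) /\
  (w0 P j <= Rabs w <= w1 P j -> s = 0%Z \/ s = sgn w).

Definition inC (P : params) (z : state P) : Prop :=
  forall j, (j < nb P)%nat -> inI P j (omg z j) (sgm z j).

Definition inD (P : params) (z : state P) : Prop :=
  inC P z /\
  exists j, (j < nb P)%nat /\
    ((Rabs (omg z j) = w1 P j /\ sgm z j = 0%Z) \/
     (Rabs (omg z j) = w0 P j /\ sgm z j = sgn (omg z j))).

Definition pflow (P : params) (z : state P) (i j : nat) : R :=
  B P i j * sin (eta z i j).

Definition s_inj (P : params) (z : state P) (j : nat) : R :=
  gs P j (xs z j) (- omg z j).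

Definition f_eta (P : params) (z : state P) (i j : nat) : R :=
  omg z i - omg z j.

Definition f_omega (P : params) (z : state P) (j : nat) : R :=
  (- pL P j + s_inj P z j - dbar P j * IZR (sgm z j)
   - rsum (nb P) (fun k => if E P j k then pflow P z j k else 0)
   + rsum (nb P) (fun i => if E P i j then pflow P z i j else 0)) / M P j.

Definition f_xs (P : params) (z : state P) (j : nat) : vec (nj P j) :=
  fs P j (xs z j) (- omg z j).

(* f(z) = 0 (the sgm component of f is identically 0) *)
Definition flow_zero (P : params) (z : state P) : Prop :=
  (forall i j, E P i j = true -> f_eta P z i j = 0) /\
  (forall j, (j < nb P)%nat -> f_omega P z j = 0) /\
  (forall j, (j < nb P)%nat -> forall k, f_xs P z j k = 0).

Definition jump_sigma (P : params) (j : nat) (w : R) (s : Z) : Z :=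
  match Req_EM_T (Rabs w) (w1 P j), Z.eq_dec s 0%Z with
  | left _, left _ => sgn w
  | _, _ =>
    match Req_EM_T (Rabs w) (w0 P j), Z.eq_dec s (sgn w) with
    | left _, left _ => 0%Z
    | _, _ => s
    end
  end.

(* g(z) = z  (x^+ = x always, so only sgm matters) *)
Definition jump_fixed (P : params) (z : state P) : Prop :=
  forall j, (j < nb P)%nat -> jump_sigma P j (omg z j) (sgm z j) = sgm z j.

Definition is_equilibrium (P : params) (z : state P) : Prop :=
  (inC P z \/ inD P z) /\
  (inC P z -> flow_zero P z) /\
  (inD P z -> jump_fixed P z).

(* At an equilibrium the state lies in C (D is a subset of C), so the flow vanishes there.
   Then eta-dot = 0 forces equal frequencies across every line, hence on the whole connected
   network; assumption (ii) makes the common frequency zero, and below the lower threshold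
   w0 > 0 the hysteresis leaves only sigma = 0. *)
From Stdlib Require Import Reals ZArith Lra Relations.
Open Scope R_scope.

Lemma equilibrium_inC (P : params) (z : state P) :
  is_equilibrium P z -> inC P z.
Proof. now intros [[HC | [HC _]] _]. Qed.

Lemma flow_zero_omg_adj (P : params) (z : state P) (i j : nat) :
  flow_zero P z -> undirected_adj P i j -> omg z i = omg z j.
Proof.
  intros [Heta _] [Hij | Hji].
  - pose proof (Heta i j Hij) as e; unfold f_eta in e; lra.
  - pose proof (Heta j i Hji) as e; unfold f_eta in e; lra.
Qed.

Lemma flow_zero_omg_connected (P : params) (z : state P) (i j : nat) :
  flow_zero P z -> clos_refl_trans nat (undirected_adj P) i j ->
  omg z i = omg z j.
Proof.
  intros Hf Hpath.
  induction Hpath as [a b Hab | a | a b c _ IH1 _ IH2].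
  - exact (flow_zero_omg_adj P z a b Hf Hab).
  - reflexivity.
  - now rewrite IH1.
Qed.

Lemma inI_zero_freq (P : params) (j : nat) (s : Z) :
  0 < w0 P j -> inI P j 0 s -> s = 0%Z.
Proof.
  intros Hw0 [_ [Hlow _]].
  apply Hlow; rewrite Rabs_R0; exact Hw0.
Qed.

Theorem lemma3 (P : params) (HP : wf P)
  (Hi : forall j, (j < nb P)%nat ->
          exists x : vec (nj P j), forall k, fs P j x 0 k = 0)
  (Hii : exists j, (j < nb P)%nat /\
          forall (xbar : vec (nj P j)) (wbar : R),
            (forall k, fs P j xbar (- wbar) k = 0) -> wbar = 0)
  (Hiii : exists z : state P, is_equilibrium P z) :
  forall z : state P, is_equilibrium P z ->
    (forall j, (j < nb P)%nat -> omg z j = 0) /\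
    (forall j, (j < nb P)%nat -> sgm z j = 0%Z) /\
    inC P z.
Proof.
  intros z Heq.
  destruct HP as [_ [_ [Hconn [_ [_ [_ [Hw _]]]]]]].
  pose proof (equilibrium_inC P z Heq) as HC.
  assert (Hflow : flow_zero P z) by (apply Heq; exact HC).
  destruct Hii as [j0 [Hj0 Hfreq]].
  assert (Hj0_zero : omg z j0 = 0).
  { apply (Hfreq (xs z j0)); intro k; apply Hflow, Hj0. }
  assert (Homg : forall j, (j < nb P)%nat -> omg z j = 0).
  { intros j Hj.
    rewrite (flow_zero_omg_connected P z j j0 Hflow (Hconn j j0 Hj Hj0)).
    exact Hj0_zero. }
  split; [exact Homg | split; [| exact HC]].
  intros j Hj.
  apply (inI_zero_freq P j); [apply Hw, Hj |].
  rewrite <- (Homg j Hj); exact (HC j Hj).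
Qed.
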